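(* Let $S_n=K_{1,n}$ be a star on $n+1\ge4$ vertices. Then $\pi_T(S_n)=n+1$.
   Context: A sequence is nonrepetitive if no block of consecutive terms has the form $r_1\dots r_nr_1\dots r_n$ with $n\ge1$. A (strong) total Thue colouring of a graph $G$ is a colouring of $V(G)\cup E(G)$ such that for every path $v_1,e_1,v_2,\dots,e_{k-1},v_k$ in $G$ the sequence of colours of $v_1,e_1,\dots,v_k$ is nonrepetitive, the sequence of colours of $v_1,\dots,v_k$ is nonrepetitive, and the sequence of colours of $e_1,\dots,e_{k-1}$ is nonrepetitive. $\pi_T(G)$ is the minimum number of colours in a total Thue colouring of $G$. *)

From mathcomp Require Import all_boot.
Set Implicit Arguments. Unset Strict Implicit. Unset Printing Implicit Defensive.

Definition nonrepetitive (s : seq nat) : Prop :=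
  ~ exists a r b : seq nat, 0 < size r /\ s = a ++ r ++ r ++ b.

Section TotalThue.
Variables (T : finType) (e : rel T).
Definition simple_graph : Prop := symmetric e /\ irreflexive e.

Definition gpath (p : seq T) : Prop :=
  match p with
  | [::] => False
  | x :: s => path e x s /\ uniq p
  end.

Variables (cv : T -> nat) (ce : T -> T -> nat).

Definition vcols (p : seq T) : seq nat := map cv p.
Definition ecols (p : seq T) : seq nat :=
  match p with [::] => [::] | x :: s => pairmap ce x s end.
(* colours of v_1, e_1, v_2, ..., e_{k-1}, v_k *)
Fixpoint tcols (p : seq T) : seq nat :=
  match p with
  | [::] => [::]
  | x :: s => match s with
              | [::] => [:: cv x]
              | y :: _ => cv x :: ce x y :: tcols s
              end
  end.

(* (strong) total Thue colouring using colours from {0,...,k-1};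
   ce gives the colour of edge xy, which must not depend on orientation *)
Definition total_thue_colouring (k : nat) : Prop :=
  (forall x, cv x < k) /\
  (forall x y, e x y -> ce x y < k) /\
  (forall x y, e x y -> ce x y = ce y x) /\
  (forall p, gpath p ->
     [/\ nonrepetitive (tcols p), nonrepetitive (vcols p)
       & nonrepetitive (ecols p)]).
End TotalThue.

Definition total_thue_number {T : finType} (e : rel T) (m : nat) : Prop :=
  (exists cv ce, total_thue_colouring e cv ce m) /\
  (forall k cv ce, total_thue_colouring e cv ce k -> m <= k).

(* star K_{1,n}: centre None, leaves Some i *)
Definition star_rel (n : nat) : rel (option 'I_n) :=
  fun x y => (x == None) (+) (y == None).
Arguments total_thue_colouring {T} e cv ce k.
Arguments total_thue_number {T} e m.
Arguments star_rel n : clear implicits.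

From mathcomp Require Import all_boot.
From mathcomp Require Import zify.

Set Implicit Arguments.
Unset Strict Implicit.
Unset Printing Implicit Defensive.

(* Lower bound: along the paths y x and y x z through a vertex x, the colour
   of x and the colours of the edges at x must be pairwise distinct, so every
   vertex of degree d forces d + 1 colours; the centre of K_{1,n} has degree n.
   Upper bound: colour the edges i + 1, the centre 0 and the leaves 1, except
   one leaf coloured 2; the only paths are of length at most 2. *)

Lemma nonrepetitive_of_blocks (s : seq nat) :
  (forall i l, 0 < l -> i + l + l <= size s ->
     take l (drop i s) <> take l (drop (i + l) s)) -> nonrepetitive s.
Proof.
move=> H [a [r [b [r_gt0 def_s]]]]; apply: (H (size a) (size r) r_gt0).
  by rewrite def_s !size_cat; lia.
have -> : size a + size r = size (a ++ r) by rewrite size_cat.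
rewrite def_s drop_size_cat // (catA a r) drop_size_cat // take_size_cat //.
by rewrite take_size_cat.
Qed.

Lemma nonrepetitive_nil : nonrepetitive [::].
Proof. by apply: nonrepetitive_of_blocks => i l l_gt0 /=; lia. Qed.

Lemma nonrepetitive_seq1 a : nonrepetitive [:: a].
Proof. by apply: nonrepetitive_of_blocks => i l l_gt0 /=; lia. Qed.

Lemma nonrepetitive_seq2 a b : a <> b -> nonrepetitive [:: a; b].
Proof.
move=> ab; apply: nonrepetitive_of_blocks => -[|[|i]] [|[|l]] //= ? ?;
  try lia; by case.
Qed.

Lemma nonrepetitive_seq3 a b c : a <> b -> b <> c -> nonrepetitive [:: a; b; c].
Proof.
move=> ab bc; apply: nonrepetitive_of_blocks => -[|[|[|i]]] [|[|l]] //= ? ?;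
  try lia; by case.
Qed.

Lemma nonrepetitive_seq5 a b c d f :
  a <> b -> b <> c -> c <> d -> d <> f -> b <> d ->
  nonrepetitive [:: a; b; c; d; f].
Proof.
move=> ab bc cd df bd; apply: nonrepetitive_of_blocks =>
  -[|[|[|[|[|i]]]]] [|[|[|l]]] //= ? ?; try lia; by case.
Qed.

Lemma repetitive_cons2 a s : ~ nonrepetitive (a :: a :: s).
Proof. by apply; exists [::], [:: a], s. Qed.

Section LocalDistinctness.
Variables (T : finType) (e : rel T) (cv : T -> nat) (ce : T -> T -> nat).
Variable k : nat.
Hypotheses (simple_e : simple_graph e) (col : total_thue_colouring e cv ce k).

Lemma adjacent_neq x y : e x y -> x != y.
Proof. by have [_ irr] := simple_e; apply: contraTneq => ->; rewrite irr. Qed.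

Lemma total_thue_vertex_neq_edge x y : e x y -> cv x <> ce x y.
Proof.
have [_ [_ [_ col_path]]] := col.
move=> exy cx; have gp : gpath e [:: x; y].
  by rewrite /= exy inE andbT adjacent_neq.
by have [+ _ _] := col_path _ gp; rewrite /= cx; apply: repetitive_cons2.
Qed.

Lemma total_thue_edges_neq x y z :
  e x y -> e x z -> y != z -> ce x y <> ce x z.
Proof.
have [sym _] := simple_e; have [_ [_ [ce_sym col_path]]] := col.
move=> exy exz yz cyz.
have gp : gpath e [:: y; x; z].
  rewrite /= (sym y x) exy exz !inE (eq_sym y x) (negbTE yz).
  by rewrite orbF (adjacent_neq exy) (adjacent_neq exz).
have [_ _ +] := col_path _ gp; rewrite /= -(ce_sym _ _ exy) cyz.
exact: repetitive_cons2.
Qed.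

Lemma total_thue_degree_lt x : #|e x| < k.
Proof.
have [cv_lt [ce_lt _]] := col.
pose s := cv x :: [seq ce x y | y in e x].
have uniq_s : uniq s.
  rewrite /= map_inj_in_uniq ?enum_uniq ?andbT; last first.
    move=> y z; rewrite !mem_enum => exy exz; apply: contra_eq => yz.
    exact/eqP/total_thue_edges_neq.
  by apply/mapP=> -[y]; rewrite mem_enum => exy; apply: total_thue_vertex_neq_edge.
have s_sub : {subset s <= iota 0 k}.
  move=> c; rewrite mem_iota inE => /predU1P[->|/imageP[y exy ->]].
    exact: cv_lt.
  exact: ce_lt.
by have := uniq_leq_size uniq_s s_sub; rewrite /= size_image size_iota.
Qed.

End LocalDistinctness.

Lemma star_simple_graph n : simple_graph (star_rel n).
Proof. by split=> [x y|x]; [apply: addbC|apply: addbb]. Qed.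

Lemma star_degree_centre n : #|star_rel n None| = n.
Proof.
have -> : #|star_rel n None| = #|predC1 (None : option 'I_n)| by apply: eq_card.
by rewrite cardC1 card_option card_ord.
Qed.

Lemma gpath_star n (p : seq (option 'I_n)) : gpath (star_rel n) p ->
  [\/ exists x, p = [:: x],
      exists i, p = [:: None; Some i],
      exists i, p = [:: Some i; None]
    | exists i j, i != j /\ p = [:: Some i; None; Some j]].
Proof.
case: p => [|x [|y [|z [|w s]]]] //=.
- by move=> _; apply: Or41; exists x.
- by case: x => [i|]; case: y => [j|] => -[] // _ _;
    [apply: Or43; exists i | apply: Or42; exists j].
- case: x => [i|]; case: y => [j|]; case: z => [k|] => -[] // _.
  by rewrite !inE /= andbT => ik; apply: Or44; exists i, k.
- case: x => [i|]; case: y => [j|]; case: z => [k|]; case: w => [l|] => -[] // _.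
  by case/and5P => _ /negP[]; rewrite inE mem_head orbT.
Qed.

Definition star_cv n (x : option 'I_n) : nat :=
  match x with None => 0 | Some i => if i == 0 :> nat then 2 else 1 end.

Definition star_ce n (x y : option 'I_n) : nat :=
  match x, y with Some i, _ => i.+1 | _, Some j => j.+1 | _, _ => 0 end.

Lemma star_cv_leaf_neq0 n (i : 'I_n) : @star_cv n (Some i) <> 0.
Proof. by rewrite /=; case: ifP. Qed.

Lemma star_cv_leaf_neq_edge n (i : 'I_n) : @star_cv n (Some i) <> i.+1.
Proof. by rewrite /=; case: ifP => /eqP; lia. Qed.

Lemma star_total_thue_colouring n : 1 < n ->
  total_thue_colouring (star_rel n) (@star_cv n) (@star_ce n) n.+1.
Proof.
move=> n_gt1; split; [|split; [|split]].
- by case=> [i|] //=; case: ifP => _; lia.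
- by case=> [i|] [j|] //= _; rewrite ltnS ltn_ord.
- by case=> [i|] [j|].
have [cv0 cv_edge] := (@star_cv_leaf_neq0 n, @star_cv_leaf_neq_edge n).
move=> p /gpath_star[[x ->]|[i ->]|[i ->]|[i [j [ij ->]]]] /=.
- by split; [apply: nonrepetitive_seq1|apply: nonrepetitive_seq1|
             apply: nonrepetitive_nil].
- by split; [apply: nonrepetitive_seq3|apply: nonrepetitive_seq2|
             apply: nonrepetitive_seq1] => //; [exact/nesym/cv_edge|exact/nesym/cv0].
- by split; [apply: nonrepetitive_seq3|apply: nonrepetitive_seq2|
             apply: nonrepetitive_seq1] => //; [apply: cv_edge|apply: cv0].
- have ij' : i.+1 <> j.+1 by move=> [/val_inj/eqP]; rewrite (negbTE ij).
  by split; [apply: nonrepetitive_seq5|apply: nonrepetitive_seq3|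
             apply: nonrepetitive_seq2] => //;
    [exact: cv_edge|exact/nesym/cv_edge|exact: cv0|exact/nesym/cv0].
Qed.

Theorem theorem17 (n : nat) (hn : 3 <= n) :
  total_thue_number (star_rel n) n.+1.
Proof.
split.
  by exists (@star_cv n), (@star_ce n); apply: star_total_thue_colouring; lia.
move=> k cv ce col.
by rewrite -(star_degree_centre n) (total_thue_degree_lt (star_simple_graph n) col).
Qed.
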